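(* In the setting of a softmax single-layer network with parameters $\theta_1,\dots,\theta_C\in\mathbb{R}^M$, ERM probabilities $p_i=e^{\theta_i^\top x}/\sum_je^{\theta_j^\top x}$ at the test input $x\in\mathbb{R}^M$, and $g$ defined from the training data matrix $X_N$ by $g=x_\perp/\|x_\perp\|^2$ if $x_\perp=(I-X_N^+X_N)x\neq0$ and $g=X_N^+X_N^{+\top}x/(1+x^\top X_N^+X_N^{+\top}x)$ otherwise: for each label $i$ let $\theta^{(i)}$ be obtained from $\theta$ by replacing $\theta_i$ with $\theta_i+g\big(\ln\sum_je^{\theta_j^\top x}-\theta_i^\top x\big)$. Then the pNML regret $\Gamma=\log\sum_{i=1}^C p_{\theta^{(i)}}(i\mid x)$ equals $$\Gamma=\log\sum_{i=1}^C\frac{p_i}{p_i+p_i^{\,x^\top g}(1-p_i)},$$ and the pNML assignment is $q_{\mathrm{pNML}}(i\mid x)=\dfrac{p_{\theta^{(i)}}(i\mid x)}{\sum_{k=1}^Cp_{\theta^{(k)}}(k\mid x)}$.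
   Context: $p_\theta(i\mid x)=e^{\theta_i^\top x}/\sum_{j=1}^Ce^{\theta_j^\top x}$; $X_N^+$ is the Moore–Penrose pseudo-inverse of the training data matrix $X_N\in\mathbb{R}^{N\times M}$. *)

From HB Require Import structures.
From mathcomp Require Import all_boot all_order all_algebra.
From mathcomp Require Import all_classical all_reals all_analysis.
Set Implicit Arguments. Unset Strict Implicit. Unset Printing Implicit Defensive.
Import Order.TTheory GRing.Theory Num.Theory.
Local Open Scope ring_scope.

Section PNML.
Variable R : realType.

Definition dotv (M : nat) (u v : 'cV[R]_M) : R := (u^T *m v) 0 0.

Definition is_MP_pinv (N M : nat) (A : 'M[R]_(N, M)) (B : 'M[R]_(M, N)) : Prop :=
  [/\ A *m B *m A = A, B *m A *m B = B,
      (A *m B)^T = A *m B & (B *m A)^T = B *m A].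

Definition softmax (M C : nat) (theta : 'I_C -> 'cV[R]_M) (x : 'cV[R]_M) (i : 'I_C) : R :=
  expR (dotv (theta i) x) / \sum_(j < C) expR (dotv (theta j) x).

Definition pnml_g (N M : nat) (X : 'M[R]_(N, M)) (Xp : 'M[R]_(M, N)) (x : 'cV[R]_M)
  : 'cV[R]_M :=
  let xperp := (1%:M - Xp *m X) *m x in
  if xperp != 0 then (dotv xperp xperp)^-1 *: xperp
  else let A := Xp *m Xp^T in (1 + dotv x (A *m x))^-1 *: (A *m x).

Definition theta_upd (M C : nat) (theta : 'I_C -> 'cV[R]_M) (g x : 'cV[R]_M) (i : 'I_C)
  : 'I_C -> 'cV[R]_M :=
  fun j => if j == i then
             theta i + (ln (\sum_(k < C) expR (dotv (theta k) x)) - dotv (theta i) x) *: g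
           else theta j.

Definition pnml_regret (M C : nat) (theta : 'I_C -> 'cV[R]_M) (g x : 'cV[R]_M) : R :=
  ln (\sum_(i < C) softmax (theta_upd theta g x i) x i).

Definition q_pnml (M C : nat) (theta : 'I_C -> 'cV[R]_M) (g x : 'cV[R]_M) (i : 'I_C) : R :=
  softmax (theta_upd theta g x i) x i /
  \sum_(k < C) softmax (theta_upd theta g x k) x k.

End PNML.

(** Replacing the score [a_i] of label [i] by [a_i + delta] turns its softmax
    probability [p] into [p e^delta / (p e^delta + 1 - p)].  The update defining
    [theta^(i)] uses [delta = (ln S - a_i) (x^T g)] with [S] the partition
    function, and [ln p = a_i - ln S], so [e^-delta = p^(x^T g)]; this gives the
    closed form of each summand of the regret, whatever the vector [g] is. *)

From HB Require Import structures.
From mathcomp Require Import all_boot all_order all_algebra.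
From mathcomp Require Import all_classical all_reals all_analysis.
From mathcomp Require Import ring lra.
Import Order.TTheory GRing.Theory Num.Theory.
Local Open Scope ring_scope.

Section Dotv.
Context {R : realType} {M : nat}.

Lemma dotvC (u v : 'cV[R]_M) : dotv u v = dotv v u.
Proof. by rewrite /dotv !mxE; apply: eq_bigr => k _; rewrite !mxE mulrC. Qed.

Lemma dotvDZl (u w v : 'cV[R]_M) (c : R) :
  dotv (u + c *: w) v = dotv u v + c * dotv w v.
Proof. by rewrite /dotv linearD /= linearZ /= mulmxDl -scalemxAl !mxE. Qed.

End Dotv.

Section Softmax.
Variables (R : realType) (M C : nat) (theta : 'I_C -> 'cV[R]_M) (x : 'cV[R]_M).

Let score j := dotv (theta j) x.
Let S := \sum_(k < C) expR (score k).

Lemma expR_score_le_partition (i : 'I_C) : expR (score i) <= S.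
Proof.
rewrite /S (bigD1 i) //= lerDl.
by apply: sumr_ge0 => k _; rewrite ltW ?expR_gt0.
Qed.

Lemma partition_gt0 (i : 'I_C) : 0 < S.
Proof. exact: lt_le_trans (expR_gt0 _) (expR_score_le_partition i). Qed.

Lemma softmax_gt0 (i : 'I_C) : 0 < softmax theta x i.
Proof. by rewrite divr_gt0 ?expR_gt0 ?(partition_gt0 i). Qed.

Lemma softmax_le1 (i : 'I_C) : softmax theta x i <= 1.
Proof. by rewrite ler_pdivrMr ?mul1r ?expR_score_le_partition ?(partition_gt0 i). Qed.

Lemma ln_softmax (i : 'I_C) : ln (softmax theta x i) = score i - ln S.
Proof. by rewrite ln_div ?expRK ?posrE ?expR_gt0 ?(partition_gt0 i). Qed.

Lemma softmax_shift_score (theta' : 'I_C -> 'cV[R]_M) (i : 'I_C) (delta : R) :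
  (forall j, j != i -> dotv (theta' j) x = score j) ->
  dotv (theta' i) x = score i + delta ->
  let p := softmax theta x i in
  softmax theta' x i = p * expR delta / (p * expR delta + (1 - p)).
Proof.
move=> eq_theta' shift_i p.
have S'E : \sum_(k < C) expR (dotv (theta' k) x)
           = S - expR (score i) + expR (score i) * expR delta.
  rewrite /S (bigD1 i) //= [in RHS](bigD1 i) //= shift_i expRD.
  rewrite (eq_bigr (fun k => expR (score k))); last by move=> k /eq_theta' ->.
  ring.
have S_gt0 := partition_gt0 i.
have A_le := expR_score_le_partition i.
have AE_gt0 : 0 < expR (score i) * expR delta by rewrite mulr_gt0 ?expR_gt0.
rewrite /p /softmax S'E shift_i expRD -/(score i) -/S.
set A := expR (score i) in A_le AE_gt0 *; set E := expR delta in AE_gt0 *.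
by field; rewrite !gt_eqF //; lra.
Qed.

Lemma softmax_theta_upd (g : 'cV[R]_M) (i : 'I_C) :
  let p := softmax theta x i in
  softmax (theta_upd theta g x i) x i = p / (p + p `^ dotv x g * (1 - p)).
Proof.
move=> p; set delta := (ln S - score i) * dotv x g.
have p_gt0 : 0 < p := softmax_gt0 i.
have powp : p `^ dotv x g = (expR delta)^-1.
  by rewrite /powR gt_eqF // -expRN ln_softmax /delta; congr expR; ring.
rewrite (@softmax_shift_score _ i delta); first last.
- by rewrite /theta_upd eqxx dotvDZl (dotvC g) -/(score i).
- by move=> j /negbTE ne_ji; rewrite /theta_upd ne_ji.
have p_le1 : p <= 1 := softmax_le1 i.
have pE_gt0 : 0 < p * expR delta by rewrite mulr_gt0 ?expR_gt0.
by rewrite -/p powp; field; rewrite !gt_eqF ?expR_gt0 //; lra.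
Qed.

End Softmax.

Theorem mainTheorem12 (R : realType) (N M C : nat)
  (X : 'M[R]_(N, M)) (Xp : 'M[R]_(M, N))
  (theta : 'I_C -> 'cV[R]_M) (x : 'cV[R]_M) :
  is_MP_pinv X Xp ->
  let g := pnml_g X Xp x in
  let p := softmax theta x in
  pnml_regret theta g x
    = ln (\sum_(i < C) p i / (p i + p i `^ dotv x g * (1 - p i)))
  /\ (forall i : 'I_C,
        q_pnml theta g x i
          = softmax (theta_upd theta g x i) x i /
            \sum_(k < C) softmax (theta_upd theta g x k) x k).
Proof.
move=> _ g p; split=> //.
by rewrite /pnml_regret; congr ln; apply: eq_bigr => i _; rewrite softmax_theta_upd.
Qed.
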